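(* Let $\theta\in\mathrm{Mat}_{r\times r}(\bar k[[\sigma]])$, $a\in\mathrm{Mat}_{r\times r}(\bar k)$, $e\in\mathrm{Mat}_{r\times s}(\bar k)$, $b\in\mathrm{Mat}_{s\times s}(\bar k)$ satisfy $\partial\theta=a$, $(a-T\mathbf 1_r)^r=0$, $ae=eb$, $(b-T\mathbf 1_s)^s=0$. Then there exists a unique $E\in\mathrm{Mat}_{r\times s}(\bar k[[\sigma]])$ with $\theta E=Eb$ and $\partial E=e$.
   Context: $\bar k$ is the algebraic closure of $k=\mathbb F_q(T)$. $\bar k[[\sigma]]$ is the ring of formal series $\sum_{i\ge0}a_i\sigma^i$ ($a_i\in\bar k$) with multiplication $(\sum_ia_i\sigma^i)(\sum_jb_j\sigma^j)=\sum_{i,j}a_ib_j^{q^{-i}}\sigma^{i+j}$ (the completion of the skew polynomial ring with $\sigma x=x^{q^{-1}}\sigma$). For a matrix $\phi=\sum_i a_{(i)}\sigma^i$ with $a_{(i)}$ matrices over $\bar k$, $\partial\phi:=a_{(0)}$. $\mathbf 1_n$ is the identity matrix. *)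

From HB Require Import structures.
From mathcomp Require Import all_boot all_order all_algebra all_field.
From mathcomp Require Import fraction.
Set Implicit Arguments. Unset Strict Implicit. Unset Printing Implicit Defensive.
Import GRing.Theory.
Local Open Scope ring_scope.

Definition ratfun (F : finFieldType) := {fraction {poly F}}.

Definition ratT (F : finFieldType) : ratfun F := @FracField.tofrac _ ('X : {poly F}).

(* An r x s matrix over the skew power series ring L[[sigma]] is encoded by
   its sequence of coefficient matrices: phi = sum_i phi i sigma^i,
   phi i : 'M[L]_(r,s).  The twist is given by fr, the inverse Frobenius
   x |-> x^(1/q) on L, so that sigma x = (fr x) sigma. *)
Definition smx (L : Type) (r s : nat) := nat -> 'M[L]_(r, s).

(* Product in L[[sigma]]:
   (sum_i a_i sigma^i)(sum_j b_j sigma^j) = sum_{i,j} a_i b_j^{q^{-i}} sigma^{i+j},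
   extended to matrices. *)
Definition smul (L : pzRingType) (fr : L -> L) (r s t : nat)
  (A : smx L r s) (B : smx L s t) : smx L r t :=
  fun n => \sum_(i < n.+1) A i *m map_mx (iter i fr) (B (n - i)%N).

Definition sconst (L : pzRingType) (r s : nat) (c : 'M[L]_(r, s)) : smx L r s :=
  fun n => if n == 0%N then c else 0.

Definition sdel (L : Type) (r s : nat) (phi : smx L r s) : 'M[L]_(r, s) := phi 0%N.

From HB Require Import structures.
From mathcomp Require Import all_boot all_order all_algebra all_field.
From mathcomp Require Import fraction.
From Stdlib Require Import FunctionalExtensionality.
Set Implicit Arguments.
Unset Strict Implicit.
Unset Printing Implicit Defensive.

(* Comparing coefficients of sigma^n in theta E = E b gives
     a E_n - E_n b_n = - \sum_(0 < i <= n) theta_i fr^i(E_(n-i)),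
   with b_n := fr^n(b), for which b_n - fr^n(T) is nilpotent.  For n = 0 this
   is a e = e b.  For n > 0 the eigenvalue fr^n(T) = T^(q^-n) of b_n differs
   from the eigenvalue T of a, so the Sylvester operator X |-> a X - X b_n is
   invertible and E_n is determined by E_0, ..., E_(n-1). *)

Import GRing.Theory.
Local Open Scope ring_scope.

Lemma map_mxX (R S : pzRingType) (f : {rmorphism R -> S}) n (A : 'M[R]_n) k :
  map_mx f (A ^+ k) = map_mx f A ^+ k.
Proof.
elim: k => [|k IH]; first by rewrite !expr0 map_mx1.
by rewrite !exprS -!mulmxE map_mxM IH.
Qed.

Section Sylvester.
Variables (L : fieldType) (m n : nat).

Lemma unitmx_add_nilpotent (M : 'M[L]_n) c k :
  c != 0 -> M ^+ k = 0 -> M + c%:M \in unitmx.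
Proof.
move=> c0 Mk0; pose d : 'M[L]_n := (- c^-1)%:M; pose x := d * M.
have xk : x ^+ k = 0.
  by rewrite exprMn_comm ?Mk0 ?mulr0 // /GRing.comm -!mulmxE scalar_mxC.
have x1 : x - 1 = (M + c%:M) * d.
  by rewrite mulrDl -!mulmxE scalar_mxC -scalar_mxM mulrN mulfV // [(-1)%:M]raddfN.
have := subrX1 x k; rewrite xk sub0r x1 => /(congr1 -%R).
rewrite opprK -mulrA -mulrN -mulmxE => /esym/mulmx1_unit.
by case.
Qed.

Definition sylvester (A : 'M[L]_m) (B : 'M[L]_n) : 'End('M[L]_(m, n)) :=
  linfun (mulmx A) - linfun (mulmxr B).

Lemma sylvesterE A B X : sylvester A B X = A *m X - X *m B.
Proof. by rewrite add_lfunE opp_lfunE !lfunE. Qed.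

Variables (A : 'M[L]_m) (B : 'M[L]_n) (al be : L) (k l : nat).
Hypotheses (al_be : al != be) (nilA : (A - al%:M) ^+ k = 0)
  (nilB : (B - be%:M) ^+ l = 0).

Lemma sylvester_eq0 X : A *m X = X *m B -> X = 0.
Proof.
move=> AX_XB; set P := B - al%:M.
have P_unit : P ^+ k \in unitmx.
  have : P \in unitmx.
    have -> : P = B - be%:M + (be - al)%:M by rewrite raddfB addrA subrK.
    by apply: unitmx_add_nilpotent nilB; rewrite subr_eq0 eq_sym.
  by move=> Pu; elim: k => [|j IH]; rewrite ?unitmx1 // exprS -mulmxE unitmx_mul Pu.
have commX1 : (A - al%:M) *m X = X *m P.
  by rewrite mulmxBl mulmxBr AX_XB mul_scalar_mx mul_mx_scalar.
have commX j : (A - al%:M) ^+ j *m X = X *m P ^+ j.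
  elim: j => [|j IH]; first by rewrite !expr0 mul1mx mulmx1.
  by rewrite !exprS -!mulmxE -mulmxA IH !mulmxA commX1.
by rewrite -(mulmxK P_unit X) -commX nilA !mul0mx.
Qed.

Lemma sylvester_ker0 : lker (sylvester A B) == 0%VS.
Proof.
apply/lker0P => X Y eqXY; apply/eqP; rewrite -subr_eq0; apply/eqP/sylvester_eq0.
by apply/eqP; rewrite -subr_eq0 -sylvesterE linearB /= eqXY subrr.
Qed.

End Sylvester.

Section InverseFrobenius.
Variables (L : fieldType) (q : nat) (fr : L -> L).
Hypotheses (q_pchar : [pchar L].-nat q) (frK : forall x, fr x ^+ q = x).

Lemma expr_pchar_inj : injective (fun x : L => x ^+ q).
Proof.
move=> x y /= xy; have q_gt0 : (0 < q)%N by case/andP: q_pchar.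
have : (x - y) ^+ q + y ^+ q = y ^+ q by rewrite -exprDn_pchar // subrK.
move=> /(canRL (addrK _)); rewrite subrr => /eqP.
by rewrite expf_eq0 q_gt0 subr_eq0 => /eqP.
Qed.

Lemma frD x y : fr (x + y) = fr x + fr y.
Proof. by apply: expr_pchar_inj; rewrite /= exprDn_pchar // !frK. Qed.

Lemma fr_is_zmod_morphism : zmod_morphism fr.
Proof. by move=> x y; apply: (addIr (fr y)); rewrite -frD !subrK. Qed.

Lemma fr_is_monoid_morphism : monoid_morphism fr.
Proof.
split=> [|x y]; apply: expr_pchar_inj; first by rewrite /= frK expr1n.
by rewrite /= exprMn !frK.
Qed.

Definition frn k := iter k fr.

Lemma frn_is_zmod_morphism k : zmod_morphism (frn k).
Proof. by elim: k => [|k IH] x y //=; rewrite IH fr_is_zmod_morphism. Qed.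

Lemma frn_is_monoid_morphism k : monoid_morphism (frn k).
Proof.
elim: k => [|k [IH1 IHM]] //; split=> [|x y] /=.
  by rewrite IH1 fr_is_monoid_morphism.1.
by rewrite IHM fr_is_monoid_morphism.2.
Qed.

HB.instance Definition _ k :=
  GRing.isZmodMorphism.Build L L (frn k) (frn_is_zmod_morphism k).
HB.instance Definition _ k :=
  GRing.isMonoidMorphism.Build L L (frn k) (frn_is_monoid_morphism k).

Lemma frnK k x : frn k x ^+ (q ^ k) = x.
Proof.
by elim: k x => [|k IH] x; rewrite ?expr1 // expnS exprM /frn iterS frK IH.
Qed.

Lemma smul_sconstE r s t (E : smx L r s) (c : 'M[L]_(s, t)) n :
  smul fr E (sconst c) n = E n *m map_mx (frn n) c.
Proof.
rewrite /smul big_ord_recr /= subnn big1 ?add0r // => i _.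
by rewrite /sconst subn_eq0 leqNgt ltn_ord [map_mx (frn i) 0]map_mx0 mulmx0.
Qed.

Section SeriesSolution.
Variables (t : L) (r s : nat) (theta : smx L r r) (a : 'M[L]_r) (b : 'M[L]_s).
Hypotheses (frn_t : forall k, (0 < k)%N -> frn k t != t)
  (theta0 : sdel theta = a) (nil_a : (a - t%:M) ^+ r = 0)
  (nil_b : (b - t%:M) ^+ s = 0).

Definition smul_tail (E : smx L r s) n :=
  \sum_(i < n) theta i.+1 *m map_mx (frn i.+1) (E (n - i.+1)%N).

Lemma smul_tail_local (E1 E2 : smx L r s) n :
  (forall m, (m < n)%N -> E1 m = E2 m) -> smul_tail E1 n = smul_tail E2 n.
Proof.
move=> E12; apply: eq_bigr => i _.
by rewrite E12 // ltn_subrL (leq_ltn_trans _ (ltn_ord i)).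
Qed.

Lemma smul_coef_eqE (E : smx L r s) n :
  smul fr theta E n = smul fr E (sconst b) n <->
  sylvester a (map_mx (frn n) b) (E n) = - smul_tail E n.
Proof.
rewrite smul_sconstE sylvesterE /smul big_ord_recl subn0.
rewrite -[theta 0%N]/(sdel theta) theta0.
rewrite [map_mx _ (E n)]map_mx_id // (_ : \sum_(i < n) _ = smul_tail E n) //.
split=> [<-|/eqP]; first by rewrite opprD addrA subrr add0r.
by rewrite subr_eq => /eqP ->; rewrite addrAC addNr add0r.
Qed.

Lemma sylvester_frn_ker0 n :
  (0 < n)%N -> lker (sylvester a (map_mx (frn n) b)) == 0%VS.
Proof.
move=> n_gt0; apply: (sylvester_ker0 (be := frn n t) (l := s) _ nil_a).
  by rewrite eq_sym frn_t.
by rewrite -(map_scalar_mx (frn n)) -map_mxB -map_mxX nil_b map_mx0.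
Qed.

Lemma eq_solution (E1 E2 : smx L r s) :
  E1 0%N = E2 0%N ->
  smul fr theta E1 = smul fr E1 (sconst b) ->
  smul fr theta E2 = smul fr E2 (sconst b) -> E1 = E2.
Proof.
move=> E12_0 solE1 solE2; apply: functional_extensionality => n.
elim/ltn_ind: n => -[// | n] IH.
apply: (lker0P (sylvester_frn_ker0 (ltn0Sn n))).
rewrite (smul_coef_eqE E1 n.+1).1 ?(smul_coef_eqE E2 n.+1).1 ?solE1 ?solE2 //.
by rewrite (smul_tail_local IH).
Qed.

Variable e : 'M[L]_(r, s).

(* series_approx n agrees with the solution in all degrees <= n; recursing on
   whole prefixes lets coefficient n depend on every lower coefficient. *)
Fixpoint series_approx n : smx L r s :=
  if n is n'.+1 then
    fun m => if m == n then (sylvester a (map_mx (frn n) b))^-1%VF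
                              (- smul_tail (series_approx n') n)
             else series_approx n' m
  else fun=> e.

Definition series_solution : smx L r s := fun n => series_approx n n.

Lemma series_approx_stable n m : (m <= n)%N -> series_approx n m = series_solution m.
Proof.
elim: n => [|n IH]; first by rewrite leqn0 => /eqP ->.
by rewrite leq_eqVlt => /predU1P [-> // | lt_mn] /=; rewrite ltn_eqF // IH.
Qed.

Lemma series_solutionS n :
  series_solution n.+1 =
  (sylvester a (map_mx (frn n.+1) b))^-1%VF (- smul_tail series_solution n.+1).
Proof.
rewrite /series_solution /= eqxx; congr (_ _ (- _)).
by apply: smul_tail_local => m; rewrite ltnS => /series_approx_stable.
Qed.

Lemma series_solutionP : a *m e = e *m b ->
  smul fr theta series_solution = smul fr series_solution (sconst b).
Proof.
move=> ae_eb; apply: functional_extensionality => -[|n]; apply/smul_coef_eqE.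
  by rewrite sylvesterE [map_mx _ b]map_mx_id // ae_eb subrr /smul_tail big_ord0 oppr0.
by rewrite series_solutionS lker0_lfunVK // sylvester_frn_ker0.
Qed.

Lemma exists_unique_solution : a *m e = e *m b ->
  exists! E : smx L r s, smul fr theta E = smul fr E (sconst b) /\ sdel E = e.
Proof.
move=> ae_eb; have solP := series_solutionP ae_eb.
exists series_solution; split=> [// | E [solE E0]].
exact: eq_solution.
Qed.

End SeriesSolution.
End InverseFrobenius.

Lemma pchar_nat_card (F : finFieldType) (R : nzRingType) (f : {rmorphism F -> R}) :
  [pchar R].-nat #|F|.
Proof.
have [p _ pF] := finPcharP F.
have pR : p \in [pchar R] := rmorph_pchar f pF.
have := pprimeChar_pgroup pF; rewrite /pgroup.pgroup cardsT.
by apply: sub_in_pnat => n _; rewrite inE => /eqP ->.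
Qed.

Lemma ratT_expn_neq (F : finFieldType) m : (1 < m)%N -> ratT F ^+ m != ratT F.
Proof.
move=> m_gt1; rewrite /ratT -rmorphXn tofrac_eq.
apply: contraTneq m_gt1 => /(congr1 (fun p : {poly F} => size p)).
by rewrite size_polyXn size_polyX => -[->].
Qed.

Theorem lemma4 (F : finFieldType) (L : closedFieldType)
  (iota : {rmorphism ratfun F -> L}) (alg : integralRange iota)
  (fr : L -> L) (hfr : forall x : L, fr x ^+ #|F| = x)
  (r s : nat) (theta : smx L r r) (a : 'M[L]_r) (e : 'M[L]_(r, s)) (b : 'M[L]_s) :
  sdel theta = a ->
  (a - (iota (ratT F))%:M) ^+ r = 0 ->
  a *m e = e *m b ->
  (b - (iota (ratT F))%:M) ^+ s = 0 ->
  exists! E : smx L r s,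
    smul fr theta E = smul fr E (sconst b) /\ sdel E = e.
Proof.
move=> h0 ha hae hb.
have q_pchar : [pchar L].-nat #|F|.
  exact: (pchar_nat_card (iota \o @tofrac _ \o polyC)).
apply: (exists_unique_solution q_pchar hfr _ h0 ha hb hae) => k k_gt0.
have q_gt1 : (1 < #|F| ^ k)%N by rewrite -(expn0 #|F|) ltn_exp2l ?finNzRing_gt1.
apply/eqP => frn_T; move/eqP: (ratT_expn_neq F q_gt1); apply.
by have := frnK hfr k (iota (ratT F)); rewrite frn_T -rmorphXn => /fmorph_inj.
Qed.
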